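(* Let $\varPhi\subset\mathbb{E}^3$ be a skew ruled surface with invariants $\delta,\kappa,\lambda$, right normalized with support function $q=\frac{f(u)+g(u)v}{w}$, neither $f$ nor $g$ the zero function, and let $\overline{T}$ be its Tchebychev vector field. Then: (a) $\overline{T}$ is tangential to the $\widetilde{K}$-curves of $\varPhi$ if and only if $\varPhi$ is conoidal with constant distribution parameter $\delta=c_1\neq0$, $g$ is a nonvanishing constant $c_2$, and $f=c_1c_2\int\lambda\,\mathrm{d}u+c_3$, $c_3\in\mathbb{R}$; (b) $\overline{T}$ is orthogonal to the $\widetilde{K}$-curves of $\varPhi$ if and only if $\varPhi$ is an Edlinger surface and $g$ and $f$ are nonvanishing constants $c_1$ and $c_2$, respectively.
   Context: $\varPhi$ is a ruled $C^r$-surface ($r\ge3$) with nonvanishing Gaussian curvature, in standard parameters $\overline{x}(u,v)=\overline{s}(u)+v\,\overline{e}(u)$, $|\overline{e}|=|\overline{e}'|=1$, $\langle\overline{s}',\overline{e}'\rangle=0$. Frame $\overline{n}=\overline{e}'$, $\overline{z}=\overline{e}\times\overline{n}$. Invariants: distribution parameter $\delta=(\overline{s}',\overline{e},\overline{e}')\neq0$, conical curvature $\kappa=(\overline{e},\overline{e}',\overline{e}'')$, $\lambda=\cot\sphericalangle(\overline{e},\overline{s}')$, $\overline{s}'=\delta\lambda\overline{e}+\delta\overline{z}$. Conoidal means $\kappa\equiv0$. An Edlinger surface is a ruled surface whose osculating quadrics are rotational hyperboloids, characterized by $\delta'=\kappa\lambda+1=0$. $w=\sqrt{\delta^2+v^2}$,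 $\overline{\xi}=(\delta\overline{n}-v\overline{z})/w$, Gaussian curvature $\widetilde{K}=-\delta^2/w^4$. The $\widetilde{K}$-curves are the curves along which $\widetilde{K}$ is constant, i.e. curves $v=v(u)$ with $2\delta vv'+\delta'(\delta^2-v^2)=0$. $h_{11}=-(\kappa w^2+\delta'v-\delta^2\lambda)/w$, $h_{12}=\delta/w$, $h_{22}=0$. A relative normalization is determined by its support function $q=\langle\overline{\xi},\overline{y}\rangle\neq0$; right normalization: $q=(f+gv)/w$, $f,g$ functions of $u$. Relative metric $G_{ij}=q^{-1}h_{ij}$, Darboux tensor $A_{ijk}=q^{-1}\langle\overline{\xi},\nabla^G_k\nabla^G_j\overline{x}_{/i}\rangle$, Tchebychev vector $\overline{T}=T^m\overline{x}_{/m}$, $T^m=\frac12A_i^{\ im}$; equivalently $T^1=\frac{w^2q_{/2}+vq}{\delta w}$, $T^2=\frac{2\delta w^2q_{/1}+\delta'q(\delta^2-v^2)}{2\delta^2w}+\frac{T^1(\kappa w^2+\delta'v-\delta^2\lambda)}{\delta}$. ''Tangential/orthogonal to a family of curves'' means at every point $\overline{T}$ is parallel/orthogonal to the tangent of the curve of the family through that point. $\int\cdots\mathrm{d}u$ denotes an antiderivative. *)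

From Stdlib Require Import Reals.
From Coquelicot Require Import Coquelicot.
Open Scope R_scope.

Definition vec : Type := (R * R * R)%type.
Definition mkv (x y z : R) : vec := (x, y, z).
Definition vx (a : vec) : R := fst (fst a).
Definition vy (a : vec) : R := snd (fst a).
Definition vz (a : vec) : R := snd a.
Definition vadd (a b : vec) : vec := mkv (vx a + vx b) (vy a + vy b) (vz a + vz b).
Definition vscal (k : R) (a : vec) : vec := mkv (k * vx a) (k * vy a) (k * vz a).
Definition vzero : vec := mkv 0 0 0.
Definition dot (a b : vec) : R := vx a * vx b + vy a * vy b + vz a * vz b.
Definition cross (a b : vec) : vec :=
  mkv (vy a * vz b - vz a * vy b) (vz a * vx b - vx a * vz b) (vx a * vy b - vy a * vx b).
Definition vnorm (a : vec) : R := sqrt (dot a a).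
Definition triple (a b c : vec) : R := dot a (cross b c).

Definition vderiv (c : R -> vec) (u : R) : vec :=
  mkv (Derive (fun t => vx (c t)) u) (Derive (fun t => vy (c t)) u) (Derive (fun t => vz (c t)) u).

Definition C3_on (a b : R) (h : R -> R) : Prop :=
  forall u, a < u < b ->
    (forall k, (k <= 3)%nat -> ex_derive_n h k u) /\ continuous (Derive_n h 3) u.
Definition vC3_on (a b : R) (c : R -> vec) : Prop :=
  C3_on a b (fun t => vx (c t)) /\ C3_on a b (fun t => vy (c t)) /\ C3_on a b (fun t => vz (c t)).

(* ---------- invariants of x(u,v) = s(u) + v e(u) ---------- *)
Definition delta (s e : R -> vec) (u : R) : R := triple (vderiv s u) (e u) (vderiv e u).
Definition kappa (e : R -> vec) (u : R) : R := triple (e u) (vderiv e u) (vderiv (vderiv e) u).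
(* lambda is defined by s' = delta*lambda*e + delta*z, i.e. <s',e> = delta*lambda *)
Definition lambda (s e : R -> vec) (u : R) : R := dot (vderiv s u) (e u) / delta s e u.
Definition ddelta (s e : R -> vec) (u : R) : R := Derive (delta s e) u.
Definition wfun (s e : R -> vec) (u v : R) : R := sqrt ((delta s e u) ^ 2 + v ^ 2).

(* A skew ruled C^3 surface in standard parameters over (a,b) x (c,d),
   with nonvanishing distribution parameter (hence K = -delta^2/w^4 <> 0). *)
Definition standard_ruled (a b : R) (s e : R -> vec) : Prop :=
  vC3_on a b s /\ vC3_on a b e /\
  forall u, a < u < b ->
    vnorm (e u) = 1 /\ vnorm (vderiv e u) = 1 /\
    dot (vderiv s u) (vderiv e u) = 0 /\ delta s e u <> 0.

Definition x_u (s e : R -> vec) (u v : R) : vec := vadd (vderiv s u) (vscal v (vderiv e u)).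
Definition x_v (e : R -> vec) (u : R) : vec := e u.

Definition q_right (s e : R -> vec) (f g : R -> R) (u v : R) : R :=
  (f u + g u * v) / wfun s e u v.

Definition q_1 (s e : R -> vec) (f g : R -> R) (u v : R) : R :=
  Derive (fun t => q_right s e f g t v) u.
Definition q_2 (s e : R -> vec) (f g : R -> R) (u v : R) : R :=
  Derive (fun t => q_right s e f g u t) v.

Definition T1 (s e : R -> vec) (f g : R -> R) (u v : R) : R :=
  let w := wfun s e u v in let d := delta s e u in
  (w ^ 2 * q_2 s e f g u v + v * q_right s e f g u v) / (d * w).

Definition T2 (s e : R -> vec) (f g : R -> R) (u v : R) : R :=
  let w := wfun s e u v in let d := delta s e u in let d' := ddelta s e u in
  (2 * d * w ^ 2 * q_1 s e f g u v + d' * q_right s e f g u v * (d ^ 2 - v ^ 2)) / (2 * d ^ 2 * w)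
  + T1 s e f g u v * (kappa e u * w ^ 2 + d' * v - d ^ 2 * lambda s e u) / d.

Definition Tvec (s e : R -> vec) (f g : R -> R) (u v : R) : vec :=
  vadd (vscal (T1 s e f g u v) (x_u s e u v)) (vscal (T2 s e f g u v) (x_v e u)).

Definition is_Kcurve (a b c d : R) (s e : R -> vec) (phi : R -> R) (al be : R) : Prop :=
  a <= al /\ al < be /\ be <= b /\
  forall u, al < u < be ->
    c < phi u < d /\ ex_derive phi u /\
    2 * delta s e u * phi u * Derive phi u
      + ddelta s e u * ((delta s e u) ^ 2 - (phi u) ^ 2) = 0.

Definition Kcurve_tangent (s e : R -> vec) (phi : R -> R) (u : R) : vec :=
  vadd (x_u s e u (phi u)) (vscal (Derive phi u) (x_v e u)).

Definition T_tangential_to_Kcurves (a b c d : R) (s e : R -> vec) (f g : R -> R) : Prop :=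
  forall phi al be, is_Kcurve a b c d s e phi al be ->
    forall u, al < u < be ->
      cross (Tvec s e f g u (phi u)) (Kcurve_tangent s e phi u) = vzero.

Definition T_orthogonal_to_Kcurves (a b c d : R) (s e : R -> vec) (f g : R -> R) : Prop :=
  forall phi al be, is_Kcurve a b c d s e phi al be ->
    forall u, al < u < be ->
      dot (Tvec s e f g u (phi u)) (Kcurve_tangent s e phi u) = 0.

Definition is_conoidal (a b : R) (e : R -> vec) : Prop :=
  forall u, a < u < b -> kappa e u = 0.

(* Edlinger surfaces, via their characterization delta' = kappa*lambda + 1 = 0 *)
Definition is_Edlinger (a b : R) (s e : R -> vec) : Prop :=
  forall u, a < u < b -> ddelta s e u = 0 /\ kappa e u * lambda s e u + 1 = 0.

(* Through every point (u, v) with v <> 0 passes a K~-curve, and its equation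
   2 δ v v' = δ' (v² - δ²) fixes its slope there.  For the right normalization T¹ = g/δ,
   while 2 δ² T² is a quadratic polynomial in v with coefficients built from δ, δ', κ, λ,
   f, g, f', g'.  Hence T is tangent (resp. orthogonal) to all K~-curves only if a cubic
   (resp. quartic) polynomial in v vanishes on an interval, i.e. only if its coefficients
   vanish, and solving these equations gives the stated conditions.  Conversely, under those
   conditions δ' = 0, so the K~-curves are the curves v = const, and T is parallel
   (resp. orthogonal) to x_u. *)

From Stdlib Require Import Reals Lra Lia List.
From Coquelicot Require Import Coquelicot.
Import ListNotations.
Open Scope R_scope.

Lemma locally_open_interval a b u : a < u < b -> locally u (fun t => a < t < b).
Proof. intros Hu. apply (open_and _ _ (open_gt a) (open_lt b)), Hu. Qed.

Lemma locally_subinterval a b u (P : R -> Prop) : a < u < b -> locally u P ->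
  exists al be, a <= al < u /\ u < be <= b /\ forall t, al < t < be -> P t.
Proof.
intros Hu [eps Heps]. pose proof (cond_pos eps).
exists (Rmax a (u - eps)), (Rmin b (u + eps)).
pose proof (Rmax_l a (u - eps)); pose proof (Rmax_r a (u - eps)).
pose proof (Rmin_l b (u + eps)); pose proof (Rmin_r b (u + eps)).
split; [split; [lra | apply Rmax_lub_lt; lra] | split; [split; [apply Rmin_glb_lt; lra | lra] |]].
intros t Ht. apply Heps. change (Rabs (t - u) < eps). apply Rabs_def1; lra.
Qed.

Lemma Derive_ext_on a b (h k : R -> R) u :
  (forall t, a < t < b -> h t = k t) -> a < u < b -> Derive h u = Derive k u.
Proof.
intros Hhk Hu. apply Derive_ext_loc.
exact (filter_imp _ _ Hhk (locally_open_interval a b u Hu)).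
Qed.

Lemma is_derive_0_const_on a b (h : R -> R) :
  (forall t, a < t < b -> is_derive h t 0) ->
  forall x y, a < x < b -> a < y < b -> h x = h y.
Proof.
intros H0 x y Hx Hy.
destruct (Rtotal_order x y) as [Hxy | [-> | Hxy]]; [| reflexivity |].
- apply (eq_is_derive h x y); [intros t Ht; apply H0; lra | exact Hxy].
- symmetry; apply (eq_is_derive h y x); [intros t Ht; apply H0; lra | exact Hxy].
Qed.

Lemma Derive_0_const_on a b (h : R -> R) :
  (forall t, a < t < b -> ex_derive h t /\ Derive h t = 0) ->
  forall x y, a < x < b -> a < y < b -> h x = h y.
Proof.
intros H0. apply is_derive_0_const_on. intros t Ht.
destruct (H0 t Ht) as [Hex HD]. rewrite <- HD. exact (Derive_correct _ _ Hex).
Qed.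

Lemma Rmult_eq0_reg_l x y : x <> 0 -> x * y = 0 -> y = 0.
Proof. intros Hx Hxy. destruct (Rmult_integral _ _ Hxy); tauto. Qed.

Fixpoint peval (p : list R) (x : R) : R :=
  match p with
  | [] => 0
  | a :: p' => a + x * peval p' x
  end.

Fixpoint pquot (p : list R) (r : R) : list R :=
  match p with
  | [] => []
  | _ :: p' => match p' with [] => [] | _ :: _ => peval p' r :: pquot p' r end
  end.

Lemma length_pquot p r : length (pquot p r) = pred (length p).
Proof.
induction p as [| a [| b p'] IH]; [reflexivity | reflexivity |].
simpl in *. now rewrite IH.
Qed.

Lemma peval_pquot p r x : peval p x = peval p r + (x - r) * peval (pquot p r) x.
Proof.
induction p as [| a [| b p'] IH]; simpl; [ring | ring |].
simpl in IH. rewrite IH. ring.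
Qed.

Lemma peval_eq0_on_interval p c d :
  c < d -> (forall x, c < x < d -> peval p x = 0) -> forall x, peval p x = 0.
Proof.
remember (length p) as n eqn:Hn. revert p Hn c d.
induction n as [| n IH]; intros p Hn c d Hcd Hp.
- now destruct p.
- set (r := (c + d) / 2).
  assert (Hr : peval p r = 0) by (apply Hp; unfold r; lra).
  assert (Hq : forall y, peval (pquot p r) y = 0).
  { apply (IH (pquot p r)) with r d; [rewrite length_pquot, <- Hn; reflexivity | unfold r; lra |].
    intros y Hy. apply (Rmult_eq0_reg_l (y - r)); [lra |].
    rewrite <- (Hp y) by (unfold r in Hy; lra). rewrite (peval_pquot p r y), Hr. ring. }
  intros x. rewrite (peval_pquot p r x), Hr, Hq. ring.
Qed.

Lemma peval_eq0_coeffs p : (forall x, peval p x = 0) -> List.Forall (fun a => a = 0) p.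
Proof.
induction p as [| a p IH]; intros Hp; constructor.
- specialize (Hp 0). simpl in Hp. lra.
- apply IH, (peval_eq0_on_interval p 1 2); [lra |].
  intros x Hx. apply (Rmult_eq0_reg_l x); [lra |].
  pose proof (Hp 0) as H0. pose proof (Hp x) as Hx'. simpl in H0, Hx'. lra.
Qed.

Lemma peval_eq0_punctured p c d :
  c < d -> (forall x, c < x < d -> x <> 0 -> peval p x = 0) -> List.Forall (fun a => a = 0) p.
Proof.
intros Hcd Hp. apply peval_eq0_coeffs.
destruct (Rle_lt_dec d 0) as [Hd | Hd].
- apply (peval_eq0_on_interval p c d Hcd). intros x Hx. apply Hp; lra.
- apply (peval_eq0_on_interval p (Rmax c 0) d); [now apply Rmax_lub_lt |].
  intros x Hx. pose proof (Rmax_l c 0). pose proof (Rmax_r c 0). apply Hp; lra.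
Qed.

Ltac vec_ring :=
  repeat match goal with x : vec |- _ => destruct x as [[? ?] ?] end;
  unfold triple, cross, dot, vadd, vscal, vzero, mkv, vx, vy, vz; simpl;
  lazymatch goal with
  | |- (_, _, _) = (_, _, _) => f_equal; [f_equal |]; ring
  | |- _ => ring
  end.

Lemma cross_lincomb (A B P : R) (x y : vec) :
  cross (vadd (vscal A x) (vscal B y)) (vadd x (vscal P y)) = vscal (A * P - B) (cross x y).
Proof. vec_ring. Qed.

Lemma dot_lincomb (A B P : R) (x y : vec) :
  dot (vadd (vscal A x) (vscal B y)) (vadd x (vscal P y)) =
  A * dot x x + (A * P + B) * dot x y + B * P * dot y y.
Proof. vec_ring. Qed.

Lemma dot_vscal_r (k : R) (x y : vec) : dot x (vscal k y) = k * dot x y.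
Proof. vec_ring. Qed.

Lemma dot_vzero_r (x : vec) : dot x vzero = 0.
Proof. vec_ring. Qed.

Lemma vscal_0 (x : vec) : vscal 0 x = vzero.
Proof. vec_ring. Qed.

Lemma dot_cross_ruling (s e n : vec) (v : R) : dot n (cross (vadd s (vscal v n)) e) = triple s e n.
Proof. vec_ring. Qed.

Lemma dot_ruling (s e n : vec) (v : R) :
  dot (vadd s (vscal v n)) (vadd s (vscal v n)) = dot s s + 2 * v * dot s n + v ^ 2 * dot n n /\
  dot (vadd s (vscal v n)) e = dot s e + v * dot n e.
Proof. split; vec_ring. Qed.

Lemma dot_orthonormal (x e n : vec) :
  dot e e = 1 -> dot n n = 1 -> dot n e = 0 ->
  dot x x = dot x e ^ 2 + dot x n ^ 2 + triple x e n ^ 2.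
Proof.
intros Hee Hnn Hne.
assert (Hen : dot e n = 0) by (rewrite <- Hne; vec_ring).
assert (Gram : triple x e n ^ 2 = dot x x * (dot e e * dot n n - dot e n ^ 2)
   - dot x e * (dot x e * dot n n - dot e n * dot x n)
   + dot x n * (dot x e * dot e n - dot e e * dot x n)) by vec_ring.
rewrite Hee, Hnn, Hen in Gram. nra.
Qed.

Lemma C3_ex_derive2 a b h u :
  C3_on a b h -> a < u < b -> ex_derive h u /\ ex_derive (Derive h) u.
Proof.
intros H Hu. destruct (H u Hu) as [Hn _].
exact (conj (Hn 1%nat ltac:(lia)) (Hn 2%nat ltac:(lia))).
Qed.

Lemma vC3_ex_derive2 a b (c : R -> vec) u : vC3_on a b c -> a < u < b ->
  ex_derive (fun t => vx (c t)) u /\ ex_derive (Derive (fun t => vx (c t))) u /\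
  ex_derive (fun t => vy (c t)) u /\ ex_derive (Derive (fun t => vy (c t))) u /\
  ex_derive (fun t => vz (c t)) u /\ ex_derive (Derive (fun t => vz (c t))) u.
Proof.
intros [Hx [Hy Hz]] Hu.
destruct (C3_ex_derive2 _ _ _ u Hx Hu), (C3_ex_derive2 _ _ _ u Hy Hu),
  (C3_ex_derive2 _ _ _ u Hz Hu).
tauto.
Qed.

Lemma dot_unit (x : vec) : vnorm x = 1 -> dot x x = 1.
Proof.
unfold vnorm. intros H. rewrite <- (sqrt_sqrt (dot x x)), H by (unfold dot; nra). ring.
Qed.

Lemma unit_curve_derive_orth (c : R -> vec) a b u :
  (forall t, a < t < b -> dot (c t) (c t) = 1) -> a < u < b ->
  ex_derive (fun t => vx (c t)) u -> ex_derive (fun t => vy (c t)) u ->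
  ex_derive (fun t => vz (c t)) u ->
  dot (vderiv c u) (c u) = 0.
Proof.
intros Hc Hu E1 E2 E3.
set (h1 := fun t => vx (c t)) in *; set (h2 := fun t => vy (c t)) in *;
  set (h3 := fun t => vz (c t)) in *.
change (Derive h1 u * h1 u + Derive h2 u * h2 u + Derive h3 u * h3 u = 0).
assert (Hsq : is_derive (fun t => h1 t * h1 t + h2 t * h2 t + h3 t * h3 t) u
  (2 * (Derive h1 u * h1 u + Derive h2 u * h2 u + Derive h3 u * h3 u)))
  by (auto_derive; [tauto | unfold h1, h2, h3; cbv beta; ring]).
assert (H1 : is_derive (fun t => h1 t * h1 t + h2 t * h2 t + h3 t * h3 t) u 0).
{ apply (is_derive_ext_loc (fun _ => 1)); [| apply (is_derive_const 1)].
  apply (filter_imp _ _ (fun t Ht => eq_sym (Hc t Ht)) (locally_open_interval a b u Hu)). }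
pose proof (is_derive_unique _ _ _ Hsq). pose proof (is_derive_unique _ _ _ H1). lra.
Qed.

Lemma wfun_pos s e u v : delta s e u <> 0 -> 0 < wfun s e u v.
Proof.
intros HD. apply sqrt_lt_R0.
pose proof (pow2_gt_0 _ HD). pose proof (pow2_ge_0 v). lra.
Qed.

Lemma wfun_sqr s e u v : wfun s e u v ^ 2 = delta s e u ^ 2 + v ^ 2.
Proof. apply pow2_sqrt. pose proof (pow2_ge_0 (delta s e u)). pose proof (pow2_ge_0 v). lra. Qed.

(* The coefficients of 2 δ² T² as a polynomial in v, in terms of δ, δ', κ, λ, f, g, f', g'. *)
Definition T2_coeffs (D p k l F G F' G' : R) : list R :=
  [2 * D * F' - p * F + 2 * G * k * D ^ 2 - 2 * G * D ^ 2 * l; 2 * D * G' + G * p; 2 * G * k].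

Definition Kslope (s e : R -> vec) (u v : R) : R :=
  ddelta s e u * (v ^ 2 - delta s e u ^ 2) / (2 * delta s e u * v).

(* K~ = -δ²/w⁴ is constant along v = φ(u) iff (δ² + φ²)/δ is; for the value K this
   solves to φ² = δ (K - δ). *)
Lemma Kcurve_ode_sqrt (D : R -> R) (K sg t : R) :
  sg * sg = 1 -> ex_derive D t -> 0 < D t * (K - D t) ->
  let phi := fun t => sg * sqrt (D t * (K - D t)) in
  ex_derive phi t /\ 2 * D t * phi t * Derive phi t + Derive D t * (D t ^ 2 - phi t ^ 2) = 0.
Proof.
intros Hsg ED Hpos phi.
pose proof (sqrt_lt_R0 _ Hpos) as Hsqrt. pose proof (pow2_sqrt _ (Rlt_le _ _ Hpos)) as Hsqr.
assert (Hphi : is_derive phi t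
  (sg * ((Derive D t * (K - D t) - D t * Derive D t) / (2 * sqrt (D t * (K - D t)))))).
{ unfold phi. auto_derive; [tauto |]. change (K + - D t) with (K - D t).
  replace (Derive (fun x => D x) t) with (Derive D t) by reflexivity. field. lra. }
split; [eexists; exact Hphi |].
rewrite (is_derive_unique _ _ _ Hphi). unfold phi.
set (S := sqrt (D t * (K - D t))) in *. set (p := Derive D t).
transitivity ((sg * sg) * D t * (p * (K - D t) - D t * p) + p * (D t ^ 2 - (sg * sg) * S ^ 2)).
- field. lra.
- rewrite Hsg, Hsqr. ring.
Qed.

Lemma tangency_poly (D p G q0 q1 q2 v : R) : D <> 0 -> v <> 0 ->
  G / D * (p * (v ^ 2 - D ^ 2) / (2 * D * v)) - peval [q0; q1; q2] v / (2 * D ^ 2) = 0 ->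
  peval [G * p * D ^ 2; q0; q1 - G * p; q2] v = 0.
Proof.
intros HD Hv H.
transitivity (- (2 * D ^ 2 * v) * (G / D * (p * (v ^ 2 - D ^ 2) / (2 * D * v))
  - peval [q0; q1; q2] v / (2 * D ^ 2))).
- simpl. field. auto.
- rewrite H. ring.
Qed.

Definition orthogonality_coeffs (D p G l q0 q1 q2 : R) : list R :=
  [- 2 * G * p * D ^ 4 * l - p * D ^ 2 * q0;
   4 * D ^ 4 * G * (l ^ 2 + 1) + 2 * D ^ 2 * l * q0 - p * D ^ 2 * q1;
   2 * G * p * D ^ 2 * l + p * q0 + 2 * D ^ 2 * l * q1 - p * D ^ 2 * q2;
   4 * D ^ 2 * G + p * q1 + 2 * D ^ 2 * l * q2;
   p * q2].

Lemma orthogonality_poly (D p G l q0 q1 q2 v : R) : D <> 0 -> v <> 0 ->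
  let P := p * (v ^ 2 - D ^ 2) / (2 * D * v) in
  let T2 := peval [q0; q1; q2] v / (2 * D ^ 2) in
  G / D * (D ^ 2 * l ^ 2 + D ^ 2 + v ^ 2) + (G / D * P + T2) * (D * l) + T2 * P = 0 ->
  peval (orthogonality_coeffs D p G l q0 q1 q2) v = 0.
Proof.
intros HD Hv P T2 H.
transitivity (4 * D ^ 3 * v *
  (G / D * (D ^ 2 * l ^ 2 + D ^ 2 + v ^ 2) + (G / D * P + T2) * (D * l) + T2 * P)).
- unfold P, T2, orthogonality_coeffs. simpl. field. auto.
- rewrite H. ring.
Qed.

Lemma orthogonality_coeffs_eq0 (D p G l q0 q1 q2 : R) : D <> 0 -> G <> 0 ->
  List.Forall (fun a => a = 0) (orthogonality_coeffs D p G l q0 q1 q2) ->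
  p = 0 /\ l * q2 = - 2 * G /\ q1 = 0 /\ l * q0 = - 2 * D ^ 2 * G * (l ^ 2 + 1).
Proof.
intros HD HG Hc. unfold orthogonality_coeffs in Hc. rewrite !Forall_cons_iff in Hc.
destruct Hc as (c0 & c1 & c2 & c3 & c4 & _).
pose proof (pow_nonzero _ 2 HD) as HD2.
assert (Hp : p = 0).
{ destruct (Req_dec p 0) as [Hp | Hp]; [exact Hp | exfalso].
  assert (Hq2 : q2 = 0) by exact (Rmult_eq0_reg_l _ _ Hp c4).
  assert (Hq0 : q0 + 2 * G * D ^ 2 * l = 0).
  { apply (Rmult_eq0_reg_l (- p * D ^ 2)); [| rewrite <- c0; ring].
    apply Rmult_integral_contrapositive_currified; [lra | exact HD2]. }
  assert (Hq1 : D ^ 2 * (4 * D ^ 2 * G - p * q1) = 0).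
  { rewrite <- c1. replace q0 with (- 2 * G * D ^ 2 * l) by lra. ring. }
  apply Rmult_eq0_reg_l in Hq1; [| exact HD2].
  rewrite Hq2 in c3. apply HG, (Rmult_eq0_reg_l (8 * D ^ 2)); [| lra].
  apply Rmult_integral_contrapositive_currified; [lra | exact HD2]. }
subst p.
assert (Hq2 : l * q2 = - 2 * G).
{ enough (2 * D ^ 2 * (l * q2 + 2 * G) = 0) as E
    by (apply Rmult_eq0_reg_l in E; [lra | apply Rmult_integral_contrapositive_currified; lra]).
  rewrite <- c3. ring. }
assert (Hl : l <> 0) by (intros ->; lra).
split; [reflexivity | split; [exact Hq2 | split]].
- apply (Rmult_eq0_reg_l (2 * D ^ 2 * l)); [| rewrite <- c2; ring].
  repeat apply Rmult_integral_contrapositive_currified; lra.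
- enough (2 * D ^ 2 * (l * q0 + 2 * D ^ 2 * G * (l ^ 2 + 1)) = 0) as E
    by (apply Rmult_eq0_reg_l in E; [lra | apply Rmult_integral_contrapositive_currified; lra]).
  rewrite <- c1. ring.
Qed.

Section RuledSurface.

Variables (a b : R) (s e : R -> vec).
Hypothesis HS : standard_ruled a b s e.

Lemma delta_neq0 u : a < u < b -> delta s e u <> 0.
Proof. intros Hu. destruct HS as [_ [_ H]]. apply H, Hu. Qed.

Lemma ex_derive_delta u : a < u < b -> ex_derive (delta s e) u.
Proof.
intros Hu. destruct HS as [Hs [He _]].
destruct (vC3_ex_derive2 a b s u Hs Hu) as (S1 & S1' & S2 & S2' & S3 & S3').
destruct (vC3_ex_derive2 a b e u He Hu) as (E1 & E1' & E2 & E2' & E3 & E3').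
set (s1 := fun t => vx (s t)) in *; set (s2 := fun t => vy (s t)) in *;
  set (s3 := fun t => vz (s t)) in *; set (e1 := fun t => vx (e t)) in *;
  set (e2 := fun t => vy (e t)) in *; set (e3 := fun t => vz (e t)) in *.
apply (ex_derive_ext (fun t =>
    Derive s1 t * (e2 t * Derive e3 t - e3 t * Derive e2 t)
  + Derive s2 t * (e3 t * Derive e1 t - e1 t * Derive e3 t)
  + Derive s3 t * (e1 t * Derive e2 t - e2 t * Derive e1 t)));
  [reflexivity |].
auto_derive. tauto.
Qed.

Lemma dot_e_e u : a < u < b -> dot (e u) (e u) = 1.
Proof. intros Hu. destruct HS as [_ [_ H]]. apply dot_unit, H, Hu. Qed.

Lemma dot_e'_e' u : a < u < b -> dot (vderiv e u) (vderiv e u) = 1.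
Proof. intros Hu. destruct HS as [_ [_ H]]. apply dot_unit, H, Hu. Qed.

Lemma dot_s'_e' u : a < u < b -> dot (vderiv s u) (vderiv e u) = 0.
Proof. intros Hu. destruct HS as [_ [_ H]]. apply H, Hu. Qed.

Lemma dot_e'_e u : a < u < b -> dot (vderiv e u) (e u) = 0.
Proof.
intros Hu. destruct HS as [_ [He _]].
destruct (vC3_ex_derive2 a b e u He Hu) as (E1 & _ & E2 & _ & E3 & _).
exact (unit_curve_derive_orth e a b u dot_e_e Hu E1 E2 E3).
Qed.

Lemma dot_s'_e u : a < u < b -> dot (vderiv s u) (e u) = delta s e u * lambda s e u.
Proof. intros Hu. unfold lambda. field. apply delta_neq0, Hu. Qed.

Lemma dot_x_u_x_u u v : a < u < b ->
  dot (x_u s e u v) (x_u s e u v) = delta s e u ^ 2 * lambda s e u ^ 2 + delta s e u ^ 2 + v ^ 2.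
Proof.
intros Hu. unfold x_u. rewrite (proj1 (dot_ruling _ (e u) _ v)).
rewrite (dot_orthonormal (vderiv s u) (e u) (vderiv e u)), dot_s'_e, dot_s'_e', dot_e'_e'
  by auto using dot_e_e, dot_e'_e', dot_e'_e.
fold (delta s e u). ring.
Qed.

Lemma dot_x_u_e u v : a < u < b -> dot (x_u s e u v) (e u) = delta s e u * lambda s e u.
Proof.
intros Hu. unfold x_u. rewrite (proj2 (dot_ruling _ _ _ v)), dot_s'_e, dot_e'_e by exact Hu. ring.
Qed.

Lemma q_2_right f g u v : a < u < b ->
  q_2 s e f g u v = g u / wfun s e u v - (f u + g u * v) * v / wfun s e u v ^ 3.
Proof.
intros Hu. pose proof (delta_neq0 u Hu) as HD. pose proof (wfun_pos s e u v HD) as Hw.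
unfold q_2, q_right. apply is_derive_unique. unfold wfun in *.
set (D := delta s e u) in *.
auto_derive.
- replace (D * (D * 1) + v * (v * 1)) with (D ^ 2 + v ^ 2) by ring.
  pose proof (pow2_gt_0 _ HD). pose proof (pow2_ge_0 v). split; [lra | split; [lra | exact I]].
- replace (D * (D * 1) + v * (v * 1)) with (D ^ 2 + v ^ 2) by ring. field. lra.
Qed.

Lemma q_1_right f g u v : a < u < b -> ex_derive f u -> ex_derive g u ->
  q_1 s e f g u v = (Derive f u + Derive g u * v) / wfun s e u v
    - (f u + g u * v) * delta s e u * ddelta s e u / wfun s e u v ^ 3.
Proof.
intros Hu Ef Eg. pose proof (delta_neq0 u Hu) as HD. pose proof (wfun_pos s e u v HD) as Hw.
pose proof (ex_derive_delta u Hu) as Ed.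
unfold q_1, q_right, ddelta. apply is_derive_unique. unfold wfun in *.
auto_derive.
- replace (delta s e u * (delta s e u * 1) + v * (v * 1)) with (delta s e u ^ 2 + v ^ 2) by ring.
  pose proof (pow2_gt_0 _ HD). pose proof (pow2_ge_0 v). repeat split; auto; lra.
- replace (delta s e u * (delta s e u * 1) + v * (v * 1)) with (delta s e u ^ 2 + v ^ 2) by ring.
  set (F' := Derive f u); set (G' := Derive g u); set (p := Derive (delta s e) u).
  field. lra.
Qed.

Lemma T1_right f g u v : a < u < b -> T1 s e f g u v = g u / delta s e u.
Proof.
intros Hu. pose proof (delta_neq0 u Hu) as HD. pose proof (wfun_pos s e u v HD) as Hw.
unfold T1. rewrite q_2_right by exact Hu. unfold q_right. field. lra.
Qed.

Lemma T2_right f g u v : a < u < b -> ex_derive f u -> ex_derive g u ->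
  T2 s e f g u v =
  peval (T2_coeffs (delta s e u) (ddelta s e u) (kappa e u) (lambda s e u)
           (f u) (g u) (Derive f u) (Derive g u)) v / (2 * delta s e u ^ 2).
Proof.
intros Hu Ef Eg. pose proof (delta_neq0 u Hu) as HD. pose proof (wfun_pos s e u v HD) as Hw.
unfold T2. cbv zeta. rewrite q_1_right, T1_right by assumption. unfold q_right.
replace (delta s e u ^ 2 - v ^ 2) with (2 * delta s e u ^ 2 - wfun s e u v ^ 2)
  by (rewrite wfun_sqr; ring).
transitivity ((2 * delta s e u * (Derive f u + Derive g u * v) - ddelta s e u * (f u + g u * v))
    / (2 * delta s e u ^ 2)
  + g u * (kappa e u * wfun s e u v ^ 2 + ddelta s e u * v - delta s e u ^ 2 * lambda s e u)
    / delta s e u ^ 2).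
- field. lra.
- rewrite wfun_sqr. unfold T2_coeffs, peval. field. exact HD.
Qed.

Lemma Tvec_tangent_cross_eq0 f g u v P : a < u < b ->
  cross (Tvec s e f g u v) (vadd (x_u s e u v) (vscal P (x_v e u))) = vzero <->
  T1 s e f g u v * P - T2 s e f g u v = 0.
Proof.
intros Hu. unfold Tvec, x_v. rewrite cross_lincomb. split.
- intros H. apply (f_equal (dot (vderiv e u))) in H.
  rewrite dot_vscal_r, dot_vzero_r in H. unfold x_u in H. rewrite dot_cross_ruling in H.
  exact (Rmult_eq0_reg_l _ _ (delta_neq0 u Hu) (eq_trans (Rmult_comm _ _) H)).
- intros ->. apply vscal_0.
Qed.

Lemma Tvec_tangent_dot f g u v P : a < u < b ->
  dot (Tvec s e f g u v) (vadd (x_u s e u v) (vscal P (x_v e u))) =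
  T1 s e f g u v * (delta s e u ^ 2 * lambda s e u ^ 2 + delta s e u ^ 2 + v ^ 2)
  + (T1 s e f g u v * P + T2 s e f g u v) * (delta s e u * lambda s e u)
  + T2 s e f g u v * P.
Proof.
intros Hu. unfold Tvec, x_v.
rewrite dot_lincomb, dot_x_u_x_u, dot_x_u_e, dot_e_e by exact Hu. ring.
Qed.

Variables (c d : R).

Lemma Kcurve_through u0 v0 : a < u0 < b -> c < v0 < d -> v0 <> 0 ->
  exists phi al be, is_Kcurve a b c d s e phi al be /\ al < u0 < be /\ phi u0 = v0.
Proof.
intros Hu0 Hv0 Hv0n. pose proof (delta_neq0 u0 Hu0) as HD0.
pose proof (Rabs_no_R0 _ Hv0n) as Habs.
set (K := (delta s e u0 ^ 2 + v0 ^ 2) / delta s e u0).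
set (sg := v0 / Rabs v0).
assert (Hsg : sg * sg = 1).
{ assert (Habs2 : Rabs v0 * Rabs v0 = v0 * v0)
    by (rewrite <- Rabs_mult; exact (Rabs_pos_eq _ (Rle_0_sqr v0))).
  unfold sg. transitivity (v0 * v0 / (Rabs v0 * Rabs v0)); [field; exact Habs |].
  rewrite Habs2. field. exact Hv0n. }
pose (phi := fun t => sg * sqrt (delta s e t * (K - delta s e t))).
assert (Hpsi0 : delta s e u0 * (K - delta s e u0) = v0 ^ 2) by (unfold K; field; exact HD0).
assert (Hphi0 : phi u0 = v0).
{ unfold phi. rewrite Hpsi0, <- Rsqr_pow2, sqrt_Rsqr_abs. unfold sg. field. exact Habs. }
assert (Hcont : continuous phi u0).
{ apply (ex_derive_continuous phi), (Kcurve_ode_sqrt (delta s e) K sg u0 Hsg (ex_derive_delta u0 Hu0)).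
  rewrite Hpsi0. now apply pow2_gt_0. }
assert (Hloc : locally u0 (fun t => c < phi t < d /\ phi t <> 0)).
{ apply (Hcont (fun y => c < y < d /\ y <> 0)). rewrite Hphi0.
  exact (open_and _ _ (open_and _ _ (open_gt c) (open_lt d)) (open_neq 0) v0 (conj Hv0 Hv0n)). }
destruct (locally_subinterval a b u0 _ Hu0 Hloc) as (al & be & Hal & Hbe & Hin).
exists phi, al, be.
split; [| split; [lra | exact Hphi0]].
split; [lra | split; [lra | split; [lra |]]].
intros t Ht. destruct (Hin t Ht) as [Hphit Hphit0].
assert (Hpos : 0 < delta s e t * (K - delta s e t)).
{ apply Rnot_le_lt. intros Hle. apply Hphit0. unfold phi. rewrite sqrt_neg_0 by exact Hle. ring. }
split; [exact Hphit |].
exact (Kcurve_ode_sqrt (delta s e) K sg t Hsg (ex_derive_delta t ltac:(lra)) Hpos).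
Qed.

Lemma Kcurve_slope phi al be u : is_Kcurve a b c d s e phi al be -> al < u < be ->
  phi u <> 0 -> Derive phi u = Kslope s e u (phi u).
Proof.
intros (Hal & _ & Hbe & HK) Hu Hphi. destruct (HK u Hu) as (_ & _ & Hode).
pose proof (delta_neq0 u ltac:(lra)) as HD.
unfold Kslope. apply (Rmult_eq_reg_r (2 * delta s e u * phi u)).
- field_simplify; [lra | auto].
- apply Rmult_integral_contrapositive_currified; [| exact Hphi].
  apply Rmult_integral_contrapositive_currified; [lra | exact HD].
Qed.

Lemma Kcurve_conditions_pointwise (Q : R -> R -> R -> Prop) :
  (forall phi al be, is_Kcurve a b c d s e phi al be ->
     forall u, al < u < be -> Q u (phi u) (Derive phi u)) ->
  forall u v, a < u < b -> c < v < d -> v <> 0 -> Q u v (Kslope s e u v).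
Proof.
intros HQ u v Hu Hv Hv0.
destruct (Kcurve_through u v Hu Hv Hv0) as (phi & al & be & HK & Hin & <-).
rewrite <- (Kcurve_slope phi al be u HK Hin Hv0).
exact (HQ phi al be HK u Hin).
Qed.

Lemma Kcurve_flat phi al be :
  (forall t, a < t < b -> ddelta s e t = 0) -> is_Kcurve a b c d s e phi al be ->
  forall u, al < u < be -> Derive phi u = 0.
Proof.
intros Hp HK u Hu. pose proof HK as (Hal & _ & Hbe & Hode).
destruct (Req_dec (phi u) 0) as [Hphi | Hphi].
- assert (Hsq : forall t, al < t < be -> phi t ^ 2 = phi u ^ 2).
  { intros t Ht. apply (is_derive_0_const_on al be (fun t => phi t ^ 2)); [| exact Ht | exact Hu].
    intros x Hx. destruct (Hode x Hx) as (_ & Ex & E).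
    rewrite Hp in E by lra.
    assert (Hprod : phi x * Derive phi x = 0).
    { apply (Rmult_eq0_reg_l (2 * delta s e x)); [pose proof (delta_neq0 x ltac:(lra)); lra |].
      rewrite <- E. ring. }
    auto_derive; [exact Ex |].
    replace (Derive (fun y => phi y) x) with (Derive phi x) by reflexivity.
    transitivity (2 * (phi x * Derive phi x)); [ring | rewrite Hprod; ring]. }
  rewrite (Derive_ext_on al be phi (fun _ => 0)); [apply Derive_const | | exact Hu].
  intros t Ht. pose proof (Hsq t Ht) as Ht2. rewrite Hphi in Ht2. nra.
- rewrite (Kcurve_slope phi al be u HK Hu Hphi). unfold Kslope.
  rewrite Hp by lra. unfold Rdiv. ring.
Qed.

Variables (f g : R -> R).
Hypothesis Hcd : c < d.
Hypothesis Hfg : forall u, a < u < b -> ex_derive f u /\ ex_derive g u.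

Lemma tangential_pointwise u :
  T_tangential_to_Kcurves a b c d s e f g -> a < u < b ->
  g u * kappa e u = 0 /\ Derive g u = 0 /\ g u * ddelta s e u = 0 /\
  delta s e u * Derive f u - ddelta s e u * f u / 2 = g u * delta s e u ^ 2 * lambda s e u.
Proof.
intros Htan Hu. destruct (Hfg u Hu) as [Ef Eg]. pose proof (delta_neq0 u Hu) as HD.
set (D := delta s e u) in *; set (p := ddelta s e u); set (k := kappa e u);
  set (l := lambda s e u); set (F' := Derive f u); set (G' := Derive g u).
assert (Hc : List.Forall (fun a => a = 0)
  [g u * p * D ^ 2; 2 * D * F' - p * f u + 2 * g u * k * D ^ 2 - 2 * g u * D ^ 2 * l;
   2 * D * G' + g u * p - g u * p; 2 * g u * k]).
{ apply (peval_eq0_punctured _ c d Hcd). intros v Hv Hv0.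
  pose proof (Kcurve_conditions_pointwise (fun u v P =>
    cross (Tvec s e f g u v) (vadd (x_u s e u v) (vscal P (x_v e u))) = vzero) Htan u v Hu Hv Hv0)
    as Ht.
  cbv beta in Ht. rewrite Tvec_tangent_cross_eq0, T1_right, T2_right in Ht by assumption.
  exact (tangency_poly _ _ _ _ _ _ v HD Hv0 Ht). }
rewrite !Forall_cons_iff in Hc. destruct Hc as (c0 & c1 & c2 & c3 & _).
assert (Hk : g u * k = 0) by lra.
split; [exact Hk | split; [| split]].
- apply (Rmult_eq0_reg_l (2 * D)); lra.
- apply (Rmult_eq0_reg_l (D ^ 2)); [exact (pow_nonzero _ 2 HD) | rewrite <- c0; ring].
- replace (2 * g u * k * D ^ 2) with (2 * (g u * k) * D ^ 2) in c1 by ring.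
  rewrite Hk in c1. lra.
Qed.

Lemma orthogonal_pointwise u :
  T_orthogonal_to_Kcurves a b c d s e f g -> a < u < b -> g u <> 0 ->
  ddelta s e u = 0 /\ kappa e u * lambda s e u + 1 = 0 /\ Derive g u = 0 /\ Derive f u = 0.
Proof.
intros Hort Hu HG. destruct (Hfg u Hu) as [Ef Eg]. pose proof (delta_neq0 u Hu) as HD.
set (D := delta s e u) in *; set (p := ddelta s e u); set (k := kappa e u);
  set (l := lambda s e u); set (F' := Derive f u); set (G' := Derive g u).
assert (Hc : List.Forall (fun a => a = 0)
  (orthogonality_coeffs D p (g u) l (2 * D * F' - p * f u + 2 * g u * k * D ^ 2 - 2 * g u * D ^ 2 * l)
     (2 * D * G' + g u * p) (2 * g u * k))).
{ apply (peval_eq0_punctured _ c d Hcd). intros v Hv Hv0.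
  pose proof (Kcurve_conditions_pointwise (fun u v P =>
    dot (Tvec s e f g u v) (vadd (x_u s e u v) (vscal P (x_v e u))) = 0) Hort u v Hu Hv Hv0)
    as Ho.
  cbv beta in Ho. rewrite Tvec_tangent_dot, T1_right, T2_right in Ho by assumption.
  exact (orthogonality_poly _ _ _ _ _ _ _ v HD Hv0 Ho). }
destruct (orthogonality_coeffs_eq0 _ _ _ _ _ _ _ HD HG Hc) as (Hp & Hq2 & Hq1 & Hq0).
rewrite Hp in Hq1, Hq0.
assert (Hkl : k * l + 1 = 0).
{ apply (Rmult_eq0_reg_l (2 * g u)); [lra |].
  transitivity (l * (2 * g u * k) + 2 * g u); [ring | lra]. }
assert (Hl : l <> 0) by (intros Hl; rewrite Hl in Hkl; lra).
split; [exact Hp | split; [exact Hkl | split]].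
- apply (Rmult_eq0_reg_l (2 * D)); lra.
- apply (Rmult_eq0_reg_l (2 * D * l)).
  { apply Rmult_integral_contrapositive_currified; [| exact Hl].
    apply Rmult_integral_contrapositive_currified; [lra | exact HD]. }
  transitivity (l * (2 * D * F' - 0 * f u + 2 * g u * k * D ^ 2 - 2 * g u * D ^ 2 * l)
    + 2 * D ^ 2 * g u * (l ^ 2 + 1) - 2 * D ^ 2 * g u * (k * l + 1)).
  + ring.
  + rewrite Hq0, Hkl. ring.
Qed.

Lemma tangential_necessary :
  (exists u, a < u < b /\ g u <> 0) -> T_tangential_to_Kcurves a b c d s e f g ->
  is_conoidal a b e /\
  exists (c1 c2 c3 : R) (L : R -> R), c1 <> 0 /\ c2 <> 0 /\
    forall u, a < u < b ->
      delta s e u = c1 /\ g u = c2 /\ is_derive L u (lambda s e u) /\ f u = c1 * c2 * L u + c3.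
Proof.
intros [ug [Hug Hgn]] Htan.
pose proof (fun u Hu => tangential_pointwise u Htan Hu) as Hpt.
assert (Hg : forall u, a < u < b -> g u = g ug).
{ intros u Hu. apply (Derive_0_const_on a b g); [| exact Hu | exact Hug].
  intros t Ht. exact (conj (proj2 (Hfg t Ht)) (proj1 (proj2 (Hpt t Ht)))). }
assert (Hk : is_conoidal a b e).
{ intros u Hu. apply (Rmult_eq0_reg_l (g u)); [rewrite Hg; assumption | apply Hpt, Hu]. }
assert (Hp : forall u, a < u < b -> ddelta s e u = 0).
{ intros u Hu. apply (Rmult_eq0_reg_l (g u)); [rewrite Hg; assumption | apply Hpt, Hu]. }
assert (Hd : forall u, a < u < b -> delta s e u = delta s e ug).
{ intros u Hu. apply (Derive_0_const_on a b (delta s e)); [| exact Hu | exact Hug].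
  intros t Ht. exact (conj (ex_derive_delta t Ht) (Hp t Ht)). }
set (c1 := delta s e ug) in *. set (c2 := g ug) in *.
pose proof (delta_neq0 ug Hug) as Hc1.
split; [exact Hk |].
exists c1, c2, 0, (fun t => / (c1 * c2) * f t).
split; [exact Hc1 | split; [exact Hgn |]].
intros u Hu. split; [exact (Hd u Hu) | split; [exact (Hg u Hu) | split]].
- destruct (Hpt u Hu) as (_ & _ & _ & Hf'). rewrite Hp, Hd, Hg in Hf' by exact Hu.
  replace (lambda s e u) with (/ (c1 * c2) * Derive f u).
  + apply is_derive_scal, Derive_correct, Hfg, Hu.
  + transitivity (/ (c1 ^ 2 * c2) * (c1 * Derive f u - 0 * f u / 2)); [field; split; assumption |].
    rewrite Hf'. field. split; assumption.
- field. split; assumption.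
Qed.

Lemma tangential_sufficient :
  (is_conoidal a b e /\
   exists (c1 c2 c3 : R) (L : R -> R), c1 <> 0 /\ c2 <> 0 /\
     forall u, a < u < b ->
       delta s e u = c1 /\ g u = c2 /\ is_derive L u (lambda s e u) /\ f u = c1 * c2 * L u + c3) ->
  T_tangential_to_Kcurves a b c d s e f g.
Proof.
intros [Hk (c1 & c2 & c3 & L & Hc1 & Hc2 & H)] phi al be HK u Hu.
pose proof HK as (Hal & _ & Hbe & _). assert (Hu' : a < u < b) by lra.
assert (Hp : forall t, a < t < b -> ddelta s e t = 0).
{ intros t Ht. unfold ddelta. rewrite (Derive_ext_on a b _ (fun _ => c1)); [apply Derive_const | | exact Ht].
  intros x Hx. apply H, Hx. }
assert (Hg' : Derive g u = 0).
{ rewrite (Derive_ext_on a b _ (fun _ => c2)); [apply Derive_const | | exact Hu']. intros x Hx; apply H, Hx. }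
assert (Hf' : Derive f u = c1 * c2 * lambda s e u).
{ rewrite (Derive_ext_on a b _ (fun t => c1 * c2 * L t + c3)); [| intros x Hx; apply H, Hx | exact Hu'].
  apply is_derive_unique. rewrite <- (Rplus_0_r (c1 * c2 * lambda s e u)).
  apply (is_derive_plus (fun t => c1 * c2 * L t) (fun _ => c3) u _ 0); [| exact (is_derive_const c3 u)].
  apply is_derive_scal, H, Hu'. }
unfold Kcurve_tangent. rewrite (Kcurve_flat phi al be Hp HK u Hu).
apply Tvec_tangent_cross_eq0; [exact Hu' |].
destruct (Hfg u Hu') as [Ef Eg]. destruct (H u Hu') as (Hd & Hg & _).
rewrite T2_right by assumption. unfold T2_coeffs, peval.
rewrite Hg', Hf', Hp, Hk, Hd, Hg by exact Hu'. field. exact Hc1.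
Qed.

Lemma orthogonal_necessary :
  (exists u, a < u < b /\ f u <> 0) -> (exists u, a < u < b /\ g u <> 0) ->
  T_orthogonal_to_Kcurves a b c d s e f g ->
  is_Edlinger a b s e /\
  exists c1 c2 : R, c1 <> 0 /\ c2 <> 0 /\ forall u, a < u < b -> g u = c1 /\ f u = c2.
Proof.
intros [uf [Huf Hfn]] [ug [Hug Hgn]] Hort.
pose proof (fun u Hu => orthogonal_pointwise u Hort Hu) as Hpt.
assert (Hg2 : forall u, a < u < b -> g u * g u = g ug * g ug).
{ intros u Hu. apply (is_derive_0_const_on a b (fun t => g t * g t)); [| exact Hu | exact Hug].
  intros t Ht. destruct (Hfg t Ht) as [_ Eg].
  replace 0 with (Derive g t * g t + g t * Derive g t).
  - apply (is_derive_mult g g); [apply Derive_correct, Eg | apply Derive_correct, Eg | apply Rmult_comm].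
  - destruct (Req_dec (g t) 0) as [-> | Hgt]; [ring |].
    rewrite (proj1 (proj2 (proj2 (Hpt t Ht Hgt)))). ring. }
assert (Hg0 : forall u, a < u < b -> g u <> 0).
{ intros u Hu Hgu. apply Hgn. pose proof (Hg2 u Hu) as E. rewrite Hgu in E. nra. }
split; [intros u Hu; destruct (Hpt u Hu (Hg0 u Hu)) as (? & ? & _); split; assumption |].
exists (g ug), (f uf). split; [exact Hgn | split; [exact Hfn |]].
intros u Hu. split.
- apply (Derive_0_const_on a b g); [| exact Hu | exact Hug].
  intros t Ht. exact (conj (proj2 (Hfg t Ht)) (proj1 (proj2 (proj2 (Hpt t Ht (Hg0 t Ht)))))).
- apply (Derive_0_const_on a b f); [| exact Hu | exact Huf].
  intros t Ht. exact (conj (proj1 (Hfg t Ht)) (proj2 (proj2 (proj2 (Hpt t Ht (Hg0 t Ht)))))).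
Qed.

Lemma orthogonal_sufficient :
  (is_Edlinger a b s e /\
   exists c1 c2 : R, c1 <> 0 /\ c2 <> 0 /\ forall u, a < u < b -> g u = c1 /\ f u = c2) ->
  T_orthogonal_to_Kcurves a b c d s e f g.
Proof.
intros [HE (c1 & c2 & _ & _ & H)] phi al be HK u Hu.
pose proof HK as (Hal & _ & Hbe & _). assert (Hu' : a < u < b) by lra.
assert (Hg' : Derive g u = 0).
{ rewrite (Derive_ext_on a b _ (fun _ => c1)); [apply Derive_const | | exact Hu']. intros x Hx; apply H, Hx. }
assert (Hf' : Derive f u = 0).
{ rewrite (Derive_ext_on a b _ (fun _ => c2)); [apply Derive_const | | exact Hu']. intros x Hx; apply H, Hx. }
unfold Kcurve_tangent. rewrite (Kcurve_flat phi al be (fun t Ht => proj1 (HE t Ht)) HK u Hu).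
destruct (Hfg u Hu') as [Ef Eg]. destruct (HE u Hu') as [Hp Hkl]. pose proof (delta_neq0 u Hu') as HD.
rewrite Tvec_tangent_dot, T1_right, T2_right by assumption. unfold T2_coeffs, peval.
rewrite Hg', Hf', Hp.
transitivity (g u / delta s e u * (kappa e u * lambda s e u + 1) * (delta s e u ^ 2 + phi u ^ 2)).
- field. exact HD.
- rewrite Hkl. ring.
Qed.

End RuledSurface.

Theorem proposition7 (a b c d : R) (s e : R -> vec) (f g : R -> R) :
  a < b -> c < d ->
  standard_ruled a b s e ->
  (forall u, a < u < b -> ex_derive f u /\ ex_derive g u) ->
  (exists u, a < u < b /\ f u <> 0) ->
  (exists u, a < u < b /\ g u <> 0) ->
  (forall u v, a < u < b -> c < v < d -> q_right s e f g u v <> 0) ->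
  (T_tangential_to_Kcurves a b c d s e f g <->
     (is_conoidal a b e /\
      exists (c1 c2 c3 : R) (L : R -> R), c1 <> 0 /\ c2 <> 0 /\
        forall u, a < u < b ->
          delta s e u = c1 /\ g u = c2 /\
          is_derive L u (lambda s e u) /\ f u = c1 * c2 * L u + c3))
  /\
  (T_orthogonal_to_Kcurves a b c d s e f g <->
     (is_Edlinger a b s e /\
      exists c1 c2 : R, c1 <> 0 /\ c2 <> 0 /\
        forall u, a < u < b -> g u = c1 /\ f u = c2)).
Proof.
intros _ Hcd HS Hfg Hf Hg _.
split; split.
- apply tangential_necessary; assumption.
- apply tangential_sufficient; assumption.
- apply orthogonal_necessary; assumption.
- apply orthogonal_sufficient; assumption.
Qed.
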